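(* Let $p\ge5$ and consider the white metallic tree $\mathcal W_\pi$ under the penultimate assignment. Then (a) $\pi$ possesses the preferred son property: for every node $\nu$, exactly one son of $\nu$ has metallic code ending with $0$, and the metallic code of that son is the metallic code of $\nu$ followed by $0$; and (b) a node of $\mathcal W_\pi$ is black if and only if its metallic code ends with the digit $0$.
   Context: Fix $p\ge5$. Metallic numbers: $m_{-1}=0$, $m_0=1$, $m_{n+2}=(p-2)m_{n+1}-m_n$. With $d=p-3$, $c=p-4$, the metallic code of a positive integer $n$ is the unique word $a_k\cdots a_0$ over $\{0,\dots,p-3\}$ with $a_k\ne0$, $n=\sum a_im_i$, containing no factor $d\,c^j\,d$ ($j\ge0$). White metallic tree under an assignment $\alpha$, $\mathcal W_\alpha$: nodes are the positive integers, each black or white; root $1$ is white; nodes are processed in increasing order and node $\nu$ receives $p-2$ sons if white, $p-3$ if black, namely the smallest integers not yet used, in increasing order; the assignment specifies for each node the position of its unique black son among its sons (leftmost = position $1$), the other sons being white. The penultimate assignment $\pi$ puts the black son at the penultimate position. *)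

From mathcomp Require Import all_boot.
Set Implicit Arguments. Unset Strict Implicit. Unset Printing Implicit Defensive.

(* metal p i = m_i, i >= 0, with m_{-1} = 0, m_0 = 1,
   m_{i+2} = (p-2) m_{i+1} - m_i.  Hence m_1 = p - 2.  For p >= 5 the
   sequence is strictly increasing, so truncated subtraction never truncates. *)
Fixpoint metal (p i : nat) : nat :=
  match i with
  | 0 => 1
  | 1 => p - 2
  | (i'.+1 as j).+1 => (p - 2) * metal p j - metal p i'
  end.

(* A word a_k ... a_0 is represented by the sequence [:: a_k; ...; a_0]
   (most significant digit first); a_0 is its last element. *)
Definition wvalue (p : nat) (w : seq nat) : nat :=
  \sum_(0 <= i < size w) nth 0 (rev w) i * metal p i.

Definition has_forbidden (p : nat) (w : seq nat) : bool :=
  has (fun j => infix ([:: p - 3] ++ nseq j (p - 4) ++ [:: p - 3]) w)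
      (iota 0 (size w)).

Definition is_mcode (p n : nat) (w : seq nat) : bool :=
  [&& all (fun a => a <= p - 3) w,
      head 0 w != 0,
      wvalue p w == n &
      ~~ has_forbidden p w].

Fixpoint words (p k : nat) : seq (seq nat) :=
  match k with
  | 0 => [:: [::]]
  | k'.+1 => flatten [seq [seq a :: w | w <- words p k'] | a <- iota 0 (p - 2)]
  end.

(* A code of n > 0 has length at most n (since m_k >= k+1), so it suffices to
   search among words of length 1..n; we return the first one found
   ([::] if none, which does not happen for n > 0). *)
Definition mcode (p n : nat) : seq nat :=
  head [::] [seq w <- flatten [seq words p k | k <- iota 1 n] | is_mcode p n w].

Definition ends_with0 (w : seq nat) : bool := last 1 w == 0.

(* Colors: true = black, false = white.  Number of sons of a node. *)
Definition nsons (p : nat) (black : bool) : nat := if black then p - 3 else p - 2.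

(* An assignment gives, for a node nu having k sons, the position (1-based,
   leftmost = 1) of its unique black son. *)
Definition assignment := nat -> nat -> nat.

Definition penultimate : assignment := fun _ k => k.-1.

(* build p a n = colors of the nodes 1, 2, ..., L created after nodes
   1, ..., n have been processed (node j is at index j-1).  Node n (processed
   at step n) receives the next nsons integers, in increasing order. *)
Fixpoint build (p : nat) (a : assignment) (n : nat) : seq bool :=
  match n with
  | 0 => [:: false]
  | n'.+1 =>
      let s := build p a n' in
      let k := nsons p (nth false s n') in
      s ++ mkseq (fun i => i.+1 == a n'.+1 k) k
  end.

Definition black (p : nat) (a : assignment) (nu : nat) : bool :=
  nth false (build p a nu) nu.-1.

Definition sons (p : nat) (a : assignment) (nu : nat) : seq nat :=
  iota (size (build p a nu.-1)).+1 (nsons p (black p a nu)).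

Example ex_metal : [seq metal 5 i | i <- iota 0 5] = [:: 1; 3; 8; 21; 55]. Proof. by []. Qed.
Example ex_tree : [seq black 5 penultimate i | i <- iota 1 12] =
  [:: false; false; true; false; false; true; false; true; false; false; true; false]. Proof. by vm_compute. Qed.

From mathcomp Require Import all_boot zify.
Set Implicit Arguments. Unset Strict Implicit. Unset Printing Implicit Defensive.

(* Admissible words (digits at most d = p - 3, no factor d c^j d) of length L
   take each value below m_L exactly once, and for words of equal length the
   numeric order is the lexicographic one.  Let s(n) be the value of code(n)0
   and K(n) the number of digits b for which code(n)b is admissible (p - 2 or
   p - 3, according as code(n)d is admissible or not).  Every positive integer
   is s(n) + b for a unique n and b < K(n), with code code(n)b, and this
   decomposition preserves the order; hence s(n+1) = s(n) + K(n).  As code(n)bd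
   is admissible iff code(n)(b+1) is, code(n+1) ends with 0 iff K(n) = p - 3.
   By induction, processing nodes 1, ..., n creates the nodes 1, ..., s(n) + 1,
   node j being black iff code(j) ends with 0: node n+1 is black iff it has
   K(n) = p - 3 sons, its sons are s(n) + 2, ..., s(n+1) + 1, and the only one
   whose code ends with 0 is its penultimate son s(n+1). *)

Lemma mulnBSn n k m : k < n -> (n - k) * m = (n - k.+1) * m + m.
Proof. by move=> lt_kn; rewrite addnC -mulSn subnSK. Qed.

Section Metallic.
Variable p : nat.
Hypothesis p5 : 5 <= p.

(** * Metallic numbers *)

Lemma metalSS i : metal p i.+2 = (p - 2) * metal p i.+1 - metal p i.
Proof. by []. Qed.

Lemma metal_double i : 2 * metal p i <= metal p i.+1.
Proof.
elim: i => [|i IH]; first by change (2 <= p - 2); lia.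
rewrite metalSS; nia.
Qed.

Lemma metal_gt0 i : 0 < metal p i.
Proof. by elim: i => [|i IH] //; have := metal_double i; lia. Qed.

Lemma metal_ltnS i : metal p i < metal p i.+1.
Proof. by have := metal_double i; have := metal_gt0 i; lia. Qed.

Lemma leq_metal : {mono metal p : i j / i <= j}.
Proof. exact/leq_mono/(homo_ltn ltn_trans metal_ltnS). Qed.

Lemma ltn_metal_id i : i < metal p i.
Proof. by elim: i => [|i IH] //; have := metal_ltnS i; lia. Qed.

Definition metal_pred L := if L is L'.+1 then metal p L' else 0.

Lemma metal_pred_leq L : metal_pred L <= metal p L.
Proof. by case: L => [|L] //; exact/ltnW/metal_ltnS. Qed.

Lemma metal_recurrence L : metal p L.+1 + metal_pred L = (p - 2) * metal p L.
Proof.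
case: L => [|L]; first by rewrite addn0 muln1.
rewrite [metal_pred _]/= metalSS; have := metal_double L.
have : 3 * metal p L.+1 <= (p - 2) * metal p L.+1 by rewrite leq_mul2r; lia.
lia.
Qed.

(** * Admissible words *)

Fixpoint starts_cjd (w : seq nat) : bool :=
  if w is a :: w' then (a == p - 3) || (a == p - 4) && starts_cjd w' else false.

Fixpoint has_dcjd (w : seq nat) : bool :=
  if w is a :: w' then (a == p - 3) && starts_cjd w' || has_dcjd w' else false.

Definition forbidden_factor j : seq nat := [:: p - 3] ++ nseq j (p - 4) ++ [:: p - 3].

Lemma starts_cjdP w :
  reflect (exists j, prefix (nseq j (p - 4) ++ [:: p - 3]) w) (starts_cjd w).
Proof.
elim: w => [|a w IH] /=; first by apply: ReflectF => -[[|j]].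
apply: (iffP idP).
  case/orP => [/eqP->|/andP[/eqP-> /IH[j hj]]]; first by exists 0; rewrite /= eqxx prefix0s.
  by exists j.+1; rewrite /= eqxx.
case=> -[|j] /=; first by rewrite prefix0s andbT eq_sym => ->.
by case/andP=> /eqP <- hj; apply/orP; right; rewrite eqxx; apply/IH; exists j.
Qed.

Lemma has_dcjdP w : reflect (exists j, infix (forbidden_factor j) w) (has_dcjd w).
Proof.
elim: w => [|a w IH]; first by apply: ReflectF => -[j]; rewrite infixs0.
rewrite [has_dcjd _]/=; apply: (iffP idP).
  case/orP => [/andP[/eqP-> /starts_cjdP[j hj]]|/IH[j hj]].
    by exists j; rewrite infix_consl /forbidden_factor /= eqxx hj.
  by exists j; rewrite infix_consl hj orbT.
case=> j; rewrite infix_consl /forbidden_factor /= => /orP[/andP[/eqP<- hj]|hj].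
  by rewrite eqxx /=; apply/orP; left; apply/starts_cjdP; exists j.
by apply/orP; right; apply/IH; exists j.
Qed.

Lemma has_forbiddenE w : has_forbidden p w = has_dcjd w.
Proof.
apply/hasP/has_dcjdP => [[j _ hj]|[j hj]]; first by exists j.
exists j => //; rewrite mem_iota add0n.
by have := size_subseq (infixW hj); rewrite /= size_cat size_nseq /=; lia.
Qed.

Lemma has_dcjd_rev w : has_dcjd (rev w) = has_dcjd w.
Proof.
have rev_ff j : rev (forbidden_factor j) = forbidden_factor j.
  by rewrite /forbidden_factor /= rev_cons rev_cat rev_nseq -cats1 -cat_cons.
by apply/has_dcjdP/has_dcjdP => -[j hj]; exists j; rewrite -infix_rev rev_ff ?revK in hj *.
Qed.

Definition admissible w := all (fun a => a <= p - 3) w && ~~ has_dcjd w.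

Lemma admissible_cons a w : admissible (a :: w) =
  [&& a <= p - 3, ~~ ((a == p - 3) && starts_cjd w) & admissible w].
Proof. by rewrite /admissible /= negb_or -!andbA; congr (_ && _); exact: andbCA. Qed.

Lemma admissible_rcons a w : admissible (rcons w a) =
  [&& a <= p - 3, ~~ ((a == p - 3) && starts_cjd (rev w)) & admissible w].
Proof.
rewrite /admissible all_rcons -has_dcjd_rev rev_rcons /= has_dcjd_rev negb_or -!andbA.
by congr (_ && _); exact: andbCA.
Qed.

Lemma admissible_rcons_d u b :
  admissible (rcons (rcons u b) (p - 3)) = admissible (rcons u b.+1).
Proof.
rewrite !admissible_rcons rev_rcons /= eqxx leqnn.
have [->|nbd] := eqVneq b (p - 3); first by rewrite andbF /=; lia.
have [->|nbc] := eqVneq b (p - 4).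
  rewrite (_ : (p - 4).+1 = p - 3) ?eqxx; last by lia.
  by rewrite (_ : p - 4 <= p - 3) /= ?andbT //; lia.
rewrite (_ : (b.+1 == p - 3) = false); last by apply/eqP; lia.
by rewrite /= [b < _]ltn_neqAle nbd.
Qed.

Lemma admissible_consK a w : admissible (a :: w) -> admissible w.
Proof. by rewrite admissible_cons => /and3P[]. Qed.

Lemma admissible_rconsK a w : admissible (rcons w a) -> admissible w.
Proof. by rewrite admissible_rcons => /and3P[]. Qed.

Lemma wvalue_nil : wvalue p [::] = 0.
Proof. by rewrite /wvalue big_nil. Qed.

Lemma wvalue_cons a w : wvalue p (a :: w) = a * metal p (size w) + wvalue p w.
Proof.
rewrite /wvalue /= big_nat_recr //= addnC; congr (_ + _).
  by rewrite rev_cons nth_rcons size_rev ltnn eqxx.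
by apply: eq_big_nat => i /andP[_ hi]; rewrite rev_cons nth_rcons size_rev hi.
Qed.

Lemma wvalue_rcons w a : wvalue p (rcons w a) = wvalue p (rcons w 0) + a.
Proof.
elim: w => [|b w IH]; first by rewrite /= !wvalue_cons wvalue_nil /=; lia.
by rewrite /= !wvalue_cons !size_rcons IH addnA.
Qed.

(* The second bound drives the induction: a leading digit d is followed by a
   word that does not start with c^j d. *)
Lemma admissible_wvalue_lt w : admissible w ->
  wvalue p w < metal p (size w) /\
  (~~ starts_cjd w -> wvalue p w + metal_pred (size w) < metal p (size w)).
Proof.
elim: w => [|a w IH]; first by rewrite wvalue_nil.
rewrite admissible_cons wvalue_cons => /and3P[a_le not_dcjd /IH[lt_w lt_w']].
have rec := metal_recurrence (size w); have le_pred := metal_pred_leq (size w).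
change (size (a :: w)) with (size w).+1.
change (metal_pred (size w).+1) with (metal p (size w)); rewrite [starts_cjd _]/=.
have mul2 := @mulnBSn p 2 (metal p (size w)) (ltnW (ltnW p5)).
have mul3 := @mulnBSn p 3 (metal p (size w)) (ltnW p5).
have mul4 := @mulnBSn p 4 (metal p (size w)) p5.
have [a_d|a_neq_d] := eqVneq a (p - 3).
  by move: not_dcjd; rewrite a_d eqxx andTb orTb => /lt_w'; split => //; lia.
have [->|a_neq_c] := eqVneq a (p - 4); first by lia.
have : a * metal p (size w) <= (p - 5) * metal p (size w) by rewrite leq_mul2r; lia.
lia.
Qed.

Lemma wvalue_cons_ge a w : 0 < a -> metal p (size w) <= wvalue p (a :: w).
Proof.
move=> a_gt0; rewrite wvalue_cons.
have : 1 * metal p (size w) <= a * metal p (size w) by rewrite leq_mul2r a_gt0 orbT.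
lia.
Qed.

Lemma wvalue_ltn_head a b s t : admissible (a :: s) -> size s = size t -> a < b ->
  wvalue p (a :: s) < wvalue p (b :: t).
Proof.
move=> /admissible_consK /admissible_wvalue_lt[lt_s _] eq_st lt_ab.
rewrite !wvalue_cons -eq_st.
have : a.+1 * metal p (size s) <= b * metal p (size s) by rewrite leq_mul2r lt_ab orbT.
rewrite mulSn; lia.
Qed.

Lemma admissible_wvalue_inj s t : admissible s -> admissible t -> size s = size t ->
  wvalue p s = wvalue p t -> s = t.
Proof.
elim: s t => [|a s IH] [|b t] //= adm_s adm_t [eq_st] eq_v.
have [lt_ab|lt_ba|eq_ab] := ltngtP a b.
- by have := wvalue_ltn_head adm_s eq_st lt_ab; rewrite eq_v ltnn.
- by have := wvalue_ltn_head adm_t (esym eq_st) lt_ba; rewrite eq_v ltnn.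
move: eq_v adm_s adm_t; rewrite -eq_ab !wvalue_cons eq_st.
by move=> /addnI eq_v /admissible_consK adm_s /admissible_consK adm_t; rewrite (IH t).
Qed.

Lemma wvalue_rcons_ltn x y a b : size x = size y ->
  admissible (rcons x a) -> admissible (rcons y b) ->
  wvalue p x < wvalue p y -> wvalue p (rcons x a) < wvalue p (rcons y b).
Proof.
elim: x y => [|a' x IH] [|b' y] //=; first by rewrite ltnn.
move=> [eq_xy] adm_x adm_y.
have [lt_ab|lt_ba|eq_ab] := ltngtP a' b'.
- by move=> _; apply: wvalue_ltn_head; rewrite // !size_rcons eq_xy.
- have adm_y' := admissible_rconsK (adm_y : admissible (rcons (b' :: y) b)).
  move=> /ltnW; rewrite leqNgt => /negP[].
  exact: wvalue_ltn_head adm_y' (esym eq_xy) lt_ba.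
rewrite -eq_ab !wvalue_cons !size_rcons eq_xy !ltn_add2l.
by apply: IH => //; [move: adm_x | move: adm_y]; apply: admissible_consK.
Qed.

Lemma exists_admissible L n : n < metal p L ->
  exists w, [/\ size w = L, admissible w, wvalue p w = n &
                (n + metal_pred L < metal p L -> ~~ starts_cjd w)].
Proof.
elim: L n => [|L IH] n lt_n; first by exists [::]; move: lt_n; rewrite wvalue_nil; case: n.
have [w [size_w adm_w val_w not_cjd_w]] := IH _ (ltn_pmod n (metal_gt0 L)).
have rec := metal_recurrence L; have le_pred := metal_pred_leq L.
set m := metal p L in val_w not_cjd_w rec le_pred *.
have mul2 := @mulnBSn p 2 m (ltnW (ltnW p5)); have mul3 := @mulnBSn p 3 m (ltnW p5).
have n_eq := divn_eq n m; set a := n %/ m in n_eq.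
have a_le : a <= p - 3.
  rewrite leqNgt; apply/negP => lt_a.
  have : (p - 2) * m <= a * m by rewrite leq_mul2r; lia.
  lia.
exists (a :: w); split.
- by rewrite /= size_w.
- rewrite admissible_cons a_le adm_w andbT; apply/negP => /andP[/eqP a_d].
  by apply/negP/not_cjd_w; move: n_eq; rewrite a_d; lia.
- by rewrite wvalue_cons size_w val_w -n_eq.
change (metal_pred L.+1) with m => lt_nm.
have a_le' : a <= p - 4.
  rewrite leqNgt; apply/negP => lt_a.
  have : (p - 3) * m <= a * m by rewrite leq_mul2r; lia.
  lia.
rewrite /= negb_or (_ : (a == p - 3) = false) /=; last by apply/eqP; lia.
apply/negP => /andP[/eqP a_c]; apply/negP/not_cjd_w.
by move: n_eq; rewrite a_c; lia.
Qed.

(** * Metallic codes *)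

Lemma is_mcodeE n w : is_mcode p n w = [&& admissible w, head 0 w != 0 & wvalue p w == n].
Proof.
by rewrite /is_mcode /admissible has_forbiddenE -!andbA; congr (_ && _); rewrite andbA andbC.
Qed.

Lemma exists_mcode n : 0 < n -> exists w, is_mcode p n w.
Proof.
have [w [_ adm_w <- _]] := exists_admissible (ltn_metal_id n).
elim: w adm_w => [|a w IH] adm_w; first by rewrite wvalue_nil.
have [a0|a_neq0] := eqVneq a 0; last by exists (a :: w); rewrite is_mcodeE adm_w a_neq0 eqxx.
by rewrite wvalue_cons a0 mul0n add0n; apply: IH; apply: admissible_consK adm_w.
Qed.

Lemma mcode_size_bounds n w : is_mcode p n w ->
  [/\ 0 < size w, n < metal p (size w) & metal p (size w).-1 <= n].
Proof.
rewrite is_mcodeE => /and3P[adm_w]; case: w adm_w => [|a w] //= adm_w a_neq0 /eqP <-.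
split => //; first by case: (admissible_wvalue_lt adm_w).
by apply: wvalue_cons_ge; rewrite lt0n.
Qed.

Lemma is_mcode_size_leq m n u v : m <= n -> is_mcode p m u -> is_mcode p n v ->
  size u <= size v.
Proof.
move=> le_mn /mcode_size_bounds[_ _ ge_u] /mcode_size_bounds[_ lt_v _].
rewrite leqNgt; apply/negP => lt_vu.
have : metal p (size v) <= metal p (size u).-1 by rewrite leq_metal; lia.
lia.
Qed.

Lemma is_mcode_uniq n w1 w2 : is_mcode p n w1 -> is_mcode p n w2 -> w1 = w2.
Proof.
move=> code1 code2.
have eq_size : size w1 = size w2.
  by apply/eqP; rewrite eqn_leq !(is_mcode_size_leq (leqnn n)).
move: code1 code2; rewrite !is_mcodeE => /and3P[adm1 _ /eqP val1] /and3P[adm2 _ /eqP val2].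
by apply: admissible_wvalue_inj; rewrite // val1 val2.
Qed.

Lemma mem_words w : all (fun a => a < p - 2) w -> w \in words p (size w).
Proof.
elim: w => [|a w IH] //= /andP[lt_a lt_w].
by apply/flatten_mapP; exists a; rewrite ?mem_iota //; apply/mapP; exists w; rewrite ?IH.
Qed.

Lemma mcodeE n w : is_mcode p n w -> mcode p n = w.
Proof.
move=> code_w; have [size_gt0 _ ge_n] := mcode_size_bounds code_w.
have in_words : w \in flatten [seq words p k | k <- iota 1 n].
  apply/flatten_mapP; exists (size w).
    by rewrite mem_iota; have := ltn_metal_id (size w).-1; lia.
  apply: mem_words; move: code_w => /andP[all_w _].
  by apply: sub_all all_w => a /=; lia.
have : w \in [seq x <- flatten [seq words p k | k <- iota 1 n] | is_mcode p n x].
  by rewrite mem_filter code_w.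
rewrite /mcode; have := filter_all (is_mcode p n) (flatten [seq words p k | k <- iota 1 n]).
case: [seq x <- _ | _] => [|x s] //= /andP[code_x _] _.
exact: is_mcode_uniq code_x code_w.
Qed.

Lemma mcodeP n : 0 < n -> is_mcode p n (mcode p n).
Proof. by case/exists_mcode => w code_w; rewrite (mcodeE code_w). Qed.

Lemma mcode0 : mcode p 0 = [::].
Proof. by []. Qed.

Lemma admissible_mcode n : admissible (mcode p n).
Proof. by case: n => [|n] //; have := mcodeP (ltn0Sn n); rewrite is_mcodeE => /and3P[]. Qed.

Lemma wvalue_mcode n : wvalue p (mcode p n) = n.
Proof.
case: n => [|n]; first by rewrite mcode0 wvalue_nil.
by have := mcodeP (ltn0Sn n); rewrite is_mcodeE => /and3P[_ _ /eqP].
Qed.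

Lemma head_mcode n : 0 < n -> head 0 (mcode p n) != 0.
Proof. by move/mcodeP; rewrite is_mcodeE => /and3P[]. Qed.

Lemma size_mcode_leq m n : m <= n -> size (mcode p m) <= size (mcode p n).
Proof.
case: m => [|m] le_mn; first by rewrite mcode0.
exact: is_mcode_size_leq le_mn (mcodeP _) (mcodeP (leq_trans _ le_mn)).
Qed.

(** * Shifted codes *)

Definition mshift n := wvalue p (rcons (mcode p n) 0).

Definition ndigits n := if admissible (rcons (mcode p n) (p - 3)) then p - 2 else p - 3.

Lemma ndigits_gt1 n : 1 < ndigits n.
Proof. by rewrite /ndigits; case: ifP; lia. Qed.

Lemma admissible_rcons_mcode n b : admissible (rcons (mcode p n) b) = (b < ndigits n).
Proof.
rewrite /ndigits !admissible_rcons admissible_mcode eqxx leqnn !andbT /=.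
case: starts_cjd; rewrite /= ?andbT; first by rewrite [b < _]ltn_neqAle andbC.
by apply/idP/idP; lia.
Qed.

Lemma wvalue_rcons_mcode n b : wvalue p (rcons (mcode p n) b) = mshift n + b.
Proof. exact: wvalue_rcons. Qed.

Lemma mshift0 : mshift 0 = 0.
Proof. by rewrite /mshift mcode0 wvalue_cons wvalue_nil. Qed.

Lemma mcode_mshiftD n b : b < ndigits n -> (0 < n) || (0 < b) ->
  mcode p (mshift n + b) = rcons (mcode p n) b.
Proof.
move=> lt_b pos; apply: mcodeE.
rewrite is_mcodeE admissible_rcons_mcode lt_b wvalue_rcons_mcode eqxx andbT /=.
case: n pos {lt_b} => [|n] pos; first by rewrite mcode0 /= -lt0n.
by have := head_mcode (ltn0Sn n); case: (mcode p n.+1).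
Qed.

Lemma mcode_mshift n : 0 < n -> mcode p (mshift n) = rcons (mcode p n) 0.
Proof. by move=> n_gt0; rewrite -[mshift n]addn0 mcode_mshiftD ?n_gt0 // ltnW ?ndigits_gt1. Qed.

Lemma mcode_decomposition n : 0 < n -> exists nu b,
  [/\ b < ndigits nu, n = mshift nu + b & mcode p n = rcons (mcode p nu) b].
Proof.
move=> n_gt0; have := mcodeP n_gt0; rewrite is_mcodeE.
case/lastP: (mcode p n) => [|u b] //= /and3P[adm_ub head_ub /eqP val_ub].
have code_u : mcode p (wvalue p u) = u.
  case: u adm_ub head_ub {val_ub} => [|a u] adm_ub head_ub; first by rewrite wvalue_nil.
  by apply: mcodeE; rewrite is_mcodeE (admissible_rconsK adm_ub) eqxx andbT.
exists (wvalue p u), b.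
by rewrite -admissible_rcons_mcode -wvalue_rcons_mcode code_u val_ub.
Qed.

Lemma mshiftD_ltn x y a b : x < y -> a < ndigits x -> b < ndigits y ->
  mshift x + a < mshift y + b.
Proof.
rewrite -!admissible_rcons_mcode -!wvalue_rcons_mcode => lt_xy adm_x adm_y.
have := size_mcode_leq (ltnW lt_xy); rewrite leq_eqVlt => /orP[/eqP eq_size|lt_size].
  by apply: wvalue_rcons_ltn; rewrite ?wvalue_mcode.
have [lt_x _] := admissible_wvalue_lt adm_x; rewrite size_rcons in lt_x.
apply: (leq_trans lt_x); apply: (@leq_trans (metal p (size (mcode p y)))).
  by rewrite leq_metal.
have := head_mcode (leq_ltn_trans (leq0n x) lt_xy).
case: (mcode p y) => [|c u] //= c_neq0.
by have := @wvalue_cons_ge c (rcons u b); rewrite size_rcons lt0n; apply.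
Qed.

Lemma mshiftS n : mshift n.+1 = mshift n + ndigits n.
Proof.
have K_gt1 := ndigits_gt1.
apply/eqP; rewrite eqn_leq; apply/andP; split; last first.
  have lt_pred : (ndigits n).-1 < ndigits n by rewrite ltn_predL ltnW.
  by have := mshiftD_ltn (ltnSn n) lt_pred (ltnW (K_gt1 n.+1)); have := K_gt1 n; lia.
have [nu [b [lt_b eq_N _]]] := mcode_decomposition (ltn_addl (mshift n) (ltnW (K_gt1 n))).
have [lt_nu_n|lt_n_nu|eq_nu] := ltngtP nu n.
- by have := mshiftD_ltn lt_nu_n lt_b (ltnW (K_gt1 n)); lia.
- rewrite leq_eqVlt in lt_n_nu; case/orP: lt_n_nu => [/eqP eq_nu|lt_nu].
    by move: eq_N; rewrite -eq_nu; lia.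
  by have := mshiftD_ltn lt_nu (ltnW (K_gt1 n.+1)) lt_b; lia.
- by move: lt_b eq_N; rewrite eq_nu; lia.
Qed.

Lemma ltn_mshift : {mono mshift : i j / i < j}.
Proof.
apply/leqW_mono/leq_mono/(homo_ltn ltn_trans) => n.
by rewrite mshiftS; have := ndigits_gt1 n; lia.
Qed.

Lemma leq_mshift_id n : n <= mshift n.
Proof. by elim: n => [|n IH] //; rewrite mshiftS; have := ndigits_gt1 n; lia. Qed.

Lemma ends_with0_mcodeP m : 0 < m ->
  reflect (exists2 nu, 0 < nu & m = mshift nu) (ends_with0 (mcode p m)).
Proof.
move=> m_gt0; apply: (iffP idP) => [|[nu nu_gt0 ->]]; last first.
  by rewrite mcode_mshift // /ends_with0 last_rcons.
have [nu [b [_ m_eq ->]]] := mcode_decomposition m_gt0.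
rewrite /ends_with0 last_rcons => /eqP b0; rewrite b0 addn0 in m_eq.
exists nu => //; rewrite lt0n; apply: contraTneq m_gt0 => nu0.
by rewrite m_eq nu0 mshift0.
Qed.

Lemma mcode1 : mcode p 1 = [:: 1].
Proof. by have := mcode_mshiftD (ndigits_gt1 0) (orbT _); rewrite mshift0 mcode0. Qed.

Lemma ends_with0_mcodeS n :
  ends_with0 (mcode p n.+1) = ~~ admissible (rcons (mcode p n) (p - 3)).
Proof.
case: n => [|n]; first by rewrite mcode1 mcode0 /admissible /= leqnn andbF.
have [nu [b [lt_b eq_n code_n]]] := mcode_decomposition (ltn0Sn n).
rewrite code_n eq_n admissible_rcons_d admissible_rcons_mcode.
have [lt_b1|ge_b1] := ltnP b.+1 (ndigits nu).
  by rewrite -addnS mcode_mshiftD ?orbT // /ends_with0 last_rcons.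
have eq_b1 : b.+1 = ndigits nu by lia.
by rewrite -addnS eq_b1 -mshiftS mcode_mshift // /ends_with0 last_rcons.
Qed.

Lemma ends_with0_mcode_between n m : mshift n < m <= (mshift n.+1).+1 ->
  ends_with0 (mcode p m) = (m == mshift n.+1).
Proof.
case/andP=> lo hi; have m_gt0 : 0 < m by case: m lo {hi}.
apply/(ends_with0_mcodeP m_gt0)/eqP => [[nu _ m_eq]|->]; last by exists n.+1.
have lt_nu : mshift nu < mshift n.+2.
  by rewrite [mshift n.+2]mshiftS -m_eq; have := ndigits_gt1 n.+1; lia.
rewrite m_eq ltn_mshift in lo; rewrite ltn_mshift in lt_nu.
by rewrite m_eq; congr mshift; lia.
Qed.

(** * The tree under the penultimate assignment *)

Lemma build_penultimate n :
  size (build p penultimate n) = (mshift n).+1 /\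
  forall j, j <= mshift n -> nth false (build p penultimate n) j = ends_with0 (mcode p j.+1).
Proof.
elim: n => [|n [size_n nth_n]].
  by rewrite mshift0; split => // -[|j] //; rewrite mcode1.
have nsons_n : nsons p (nth false (build p penultimate n) n) = ndigits n.
  by rewrite nth_n ?leq_mshift_id // ends_with0_mcodeS /nsons /ndigits; case: (admissible _).
rewrite [build _ _ n.+1]/= nsons_n size_cat size_mkseq size_n mshiftS; split => // j le_j.
rewrite nth_cat size_n; case: ltnP => [lt_j|ge_j]; first exact: nth_n.
have K_gt1 := ndigits_gt1 n.
rewrite nth_mkseq /penultimate; last by lia.
rewrite (@ends_with0_mcode_between n) mshiftS; first by apply/eqP/eqP; lia.
by apply/andP; split; lia.
Qed.

Lemma black_penultimate nu : 0 < nu -> black p penultimate nu = ends_with0 (mcode p nu).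
Proof.
case: nu => [|n] // _; have [_ nth_n] := build_penultimate n.+1.
by rewrite /black nth_n //; apply: ltnW (leq_mshift_id n.+1).
Qed.

Lemma sons_penultimate n : sons p penultimate n.+1 = iota (mshift n).+2 (ndigits n).
Proof.
have [size_n _] := build_penultimate n.
rewrite /sons black_penultimate // ends_with0_mcodeS size_n /nsons /ndigits.
by case: (admissible _).
Qed.

End Metallic.

Theorem theorem5 (p : nat) : 5 <= p ->
  (forall nu, 0 < nu ->
     exists s, [/\ s \in sons p penultimate nu,
                  ends_with0 (mcode p s),
                  mcode p s = rcons (mcode p nu) 0 &
                  forall s', s' \in sons p penultimate nu ->
                             ends_with0 (mcode p s') -> s' = s])
  /\
  (forall nu, 0 < nu -> black p penultimate nu = ends_with0 (mcode p nu)).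
Proof.
move=> p5; split => [[|n] // _|]; last exact: black_penultimate.
have K_gt1 := ndigits_gt1 p5 n.
have son_range s :
    (s \in sons p penultimate n.+1) = ((mshift p n).+1 < s <= (mshift p n.+1).+1).
  by rewrite sons_penultimate // mem_iota mshiftS // !addSn ltnS.
exists (mshift p n.+1); split.
- by rewrite son_range mshiftS //; lia.
- by rewrite mcode_mshift // /ends_with0 last_rcons.
- exact: mcode_mshift.
move=> s; rewrite son_range => /andP[/ltnW lo hi].
by rewrite (@ends_with0_mcode_between p p5 n) ?lo // => /eqP.
Qed.
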